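(* Assume the general setting of the context, with Hypothesis A holding for $r=\sum_{i=0}^{\bar k}r_i$. If $\hat\delta\in(0,\infty)^{\bar k}$ is feasible, then the map $\delta\mapsto\inf_{\pi\in\mathcal H(\delta)}\pi(r_0)$ is continuous at $\hat\delta$.
   Context: General setting. Consider the controlled diffusion $dX_t=b(X_t,U_t)\,dt+\sigma(X_t)\,dW_t$ in $\mathbb R^d$, where $W$ is a standard $d$-dimensional Brownian motion and the control takes values in a compact metrizable set $\mathbb U$. Assume: $b$ continuous and, together with $\sigma$, locally Lipschitz in $x$ (uniformly in $u$); $|b(x,u)|^2+\|\sigma(x)\|^2\le C(1+|x|^2)$; $a=\sigma\sigma^{\mathsf T}$ uniformly positive definite on every ball. Controls may be relaxed ($\mathcal P(\mathbb U)$-valued, with $b$ and costs extended by integration). Controlled generator $\mathcal L^u f=\tfrac12\sum a_{ij}\partial_{ij}f+b(x,u)\cdot\nabla f$. $\mathscr G=\{\pi\in\mathcal P(\mathbb R^d\times\mathbb U):\int\mathcal L^u f\,d\pi=0\ \forall f\in C_c^\infty(\mathbb R^d)\}$ (the set of ergodic occupation measures of stable stationary Markov controls); $\pi(g)=\int g\,d\pi$. Costs $r_0,\dots,r_{\bar k}\ge0$ continuous, locally Lipschitz in $x$ uniformly in $u$; $r=\sum_i r_i$. For $\delta\in\mathbb R_+^{\bar k}$: $\mathcal H(\delta)=\{\pi\in\mathscr G:\pi(r_i)\le\delta_i,\ i=1,\dots,\bar k\}$ and $\mathcal H^{\circ}(\delta)=\{\pi\in\mathscr G:\pi(r_i)<\delta_i,\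 i=1,\dots,\bar k\}$. A vector $\delta\in(0,\infty)^{\bar k}$ is feasible if there is $\pi'\in\mathcal H^\circ(\delta)$ with $\pi'(r_0)<\infty$. Hypothesis A (for a cost $r$): there is an open $\mathcal K\subset\mathbb R^d$ such that (i) $\bar{\mathcal K}\cap\{x:\min_u r(x,u)\le c\}$ is compact for all $c$; (ii) there exist nonnegative inf-compact $\mathcal V\in C^2(\mathbb R^d)$ and $h\in C(\mathbb R^d\times\mathbb U)$ with $\mathcal L^u\mathcal V\le1-h$ on $\mathcal K^c\times\mathbb U$ and $\mathcal L^u\mathcal V\le 1+r$ on $\mathcal K\times\mathbb U$. *)

From HB Require Import structures.
From mathcomp Require Import all_boot all_order all_algebra.
From mathcomp Require Import all_classical all_reals all_analysis.
Set Implicit Arguments. Unset Strict Implicit. Unset Printing Implicit Defensive.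
Import Order.TTheory GRing.Theory Num.Theory.
Import numFieldNormedType.Exports.
Local Open Scope classical_set_scope.
Local Open Scope ring_scope.

Section ControlledDiffusion.
Variables (R : realType) (d : nat).
Local Notation X := ('rV[R]_d : normedModType R).

Definition ebasis (i : 'I_d) : X := delta_mx 0 i.

Definition pd (i : 'I_d) (f : X -> R) : X -> R := fun x => derive f x (ebasis i).

Definition iter_pd (s : seq 'I_d) (f : X -> R) : X -> R := foldr pd f s.

Definition smooth (f : X -> R) := forall (s : seq 'I_d) (x : X), differentiable (iter_pd s f) x.

Definition C2 (f : X -> R) :=
  [/\ forall x, differentiable f x,
      forall i x, differentiable (pd i f) x
    & forall i j, continuous (pd i (pd j f))].

Definition Cc_inf (f : X -> R) := smooth f /\ compact (closure [set x | f x != 0]).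

Variable U : pseudoPMetricType R.

Definition diffusion_mx (sigma : X -> 'M[R]_d) (x : X) : 'M[R]_d := sigma x *m (sigma x)^T.

Definition Lgen (b : X -> U -> X) (sigma : X -> 'M[R]_d) (f : X -> R) (x : X) (u : U) : R :=
  2^-1 * (\sum_(i < d) \sum_(j < d) diffusion_mx sigma x i j * pd i (pd j f) x)
  + \sum_(i < d) b x u 0 i * pd i f x.

Definition Omega := g_sigma_algebraType (@open (X * U)%type).

Definition pint (pi : probability Omega R) (g : X -> U -> R) : \bar R :=
  (\int[pi]_p (g p.1 p.2)%:E)%E.

Definition Gset (b : X -> U -> X) (sigma : X -> 'M[R]_d) : set (probability Omega R) :=
  [set pi | forall f : X -> R, Cc_inf f -> pint pi (Lgen b sigma f) = 0%E].

Variable kbar : nat.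

(* r_0 = r ord0, r_i = r (lift ord0 i') for i' : 'I_kbar (i = i'+1) *)
Definition Hset (b : X -> U -> X) (sigma : X -> 'M[R]_d) (r : 'I_kbar.+1 -> X -> U -> R)
  (delta : 'rV[R]_kbar) : set (probability Omega R) :=
  [set pi | Gset b sigma pi /\
     forall i : 'I_kbar, (pint pi (r (lift ord0 i)) <= (delta 0 i)%:E)%E].

Definition Hset_circ (b : X -> U -> X) (sigma : X -> 'M[R]_d) (r : 'I_kbar.+1 -> X -> U -> R)
  (delta : 'rV[R]_kbar) : set (probability Omega R) :=
  [set pi | Gset b sigma pi /\
     forall i : 'I_kbar, (pint pi (r (lift ord0 i)) < (delta 0 i)%:E)%E].

Definition feasible (b : X -> U -> X) (sigma : X -> 'M[R]_d) (r : 'I_kbar.+1 -> X -> U -> R)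
  (delta : 'rV[R]_kbar) :=
  (forall i, 0 < delta 0 i) /\
  exists pi', Hset_circ b sigma r delta pi' /\ (pint pi' (r ord0) < +oo)%E.

Definition value (b : X -> U -> X) (sigma : X -> 'M[R]_d) (r : 'I_kbar.+1 -> X -> U -> R)
  (delta : 'rV[R]_kbar) : \bar R :=
  ereal_inf [set pint pi (r ord0) | pi in Hset b sigma r delta].

Definition inf_compact (T : topologicalType) (h : T -> R) := forall c : R, compact [set z | h z <= c].

Definition HypA (b : X -> U -> X) (sigma : X -> 'M[R]_d) (rr : X -> U -> R) :=
  exists K : set X, open K /\
   (forall c : R, compact (closure K `&` [set x | inf (range (rr x)) <= c])) /\
   exists (V : X -> R) (h : X -> U -> R),
     [/\ (forall x, 0 <= V x), inf_compact V & C2 V] /\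
     [/\ (forall x u, 0 <= h x u),
         continuous (fun p : X * U => h p.1 p.2)
       & inf_compact (fun p : X * U => h p.1 p.2)] /\
     (forall x u, ~ K x -> Lgen b sigma V x u <= 1 - h x u) /\
     (forall x u, K x -> Lgen b sigma V x u <= 1 + rr x u).

Definition loc_lip_unif (W : normedModType R) (g : X -> U -> W) :=
  forall rho : R, exists L : R, forall x y u,
    `|x| <= rho -> `|y| <= rho -> `|g x u - g y u| <= L * `|x - y|.

Definition loc_lip (W : normedModType R) (g : X -> W) :=
  forall rho : R, exists L : R, forall x y,
    `|x| <= rho -> `|y| <= rho -> `|g x - g y| <= L * `|x - y|.

End ControlledDiffusion.

From HB Require Import structures.
From mathcomp Require Import all_boot all_order all_algebra.
From mathcomp Require Import all_classical all_reals all_analysis.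
From mathcomp Require Import measurable_realfun lra.
Set Implicit Arguments. Unset Strict Implicit. Unset Printing Implicit Defensive.
Import Order.TTheory GRing.Theory Num.Theory.
Import numFieldNormedType.Exports.
Local Open Scope classical_set_scope.
Local Open Scope ring_scope.

(* The feasible region is convex: a convex combination of two ergodic occupation
   measures is again one, and every cost pi(r_i) is affine along it.  Let pi' be
   strictly feasible at deltahat with slack m.  Mixing any pi that is feasible at
   one constraint level with pi' at weight |deltahat - delta| / m gives a measure
   feasible at the other level whose r_0-cost exceeds pi(r_0) by at most that
   weight times pi'(r_0).  Doing this in both directions shows that the value
   function is Lipschitz at deltahat, with constant pi'(r_0) / m. *)

Lemma integral_eq0_funepos_funeneg d (T : measurableType d) (R : realType)
    (mu : {measure set T -> \bar R}) (f : T -> \bar R) :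
  (\int[mu]_x f x = 0)%E ->
  exists c : R, (\int[mu]_x f^\+ x = c%:E /\ \int[mu]_x f^\- x = c%:E)%E.
Proof.
rewrite integralE.
have : (0 <= \int[mu]_x f^\+ x)%E by apply: integral_ge0 => x _; exact: funepos_ge0.
have : (0 <= \int[mu]_x f^\- x)%E by apply: integral_ge0 => x _; exact: funeneg_ge0.
case: (\int[mu]_x f^\+ x)%E => [p| |]; case: (\int[mu]_x f^\- x)%E => [n| |] //= _ _.
by move=> /eqP; rewrite -EFinD eqe subr_eq0 => /eqP ->; exists n.
Qed.

Section probability_mixture.
Context d (T : measurableType d) (R : realType).
Variables (t : {i01 R}) (P1 P2 : probability T R).

Definition pmix (A : set T) : \bar R :=
  (t%:inum%:E * P1 A + (1 - t%:inum)%:E * P2 A)%E.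

Lemma pmixE :
  pmix = measure_add (mscale (t%:inum : R)%:nng P1) (mscale (1 - t%:inum)%:nng P2).
Proof. by apply/funext => A; rewrite measure_addE. Qed.

Let pmix0 : pmix set0 = 0%E.
Proof. by rewrite /pmix !measure0 !mule0 adde0. Qed.

Let pmix_ge0 A : (0 <= pmix A)%E.
Proof. by rewrite /pmix adde_ge0 // mule_ge0. Qed.

Let pmix_sigma_additive : semi_sigma_additive pmix.
Proof. rewrite pmixE; exact: measure_semi_sigma_additive. Qed.

HB.instance Definition _ := isMeasure.Build _ _ _ pmix pmix0 pmix_ge0 pmix_sigma_additive.

Let pmix_setT : pmix setT = 1%E.
Proof. by rewrite /pmix !probability_setT !mule1 -EFinD subrKC. Qed.

HB.instance Definition _ := Measure_isProbability.Build _ _ _ pmix pmix_setT.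

Lemma ge0_integral_pmix (f : T -> \bar R) :
  measurable_fun setT f -> (forall x, 0 <= f x)%E ->
  (\int[pmix]_x f x = t%:inum%:E * \int[P1]_x f x + (1 - t%:inum)%:E * \int[P2]_x f x)%E.
Proof.
by move=> mf f0; rewrite pmixE ge0_integral_measure_add // !ge0_integral_mscale.
Qed.

Lemma integral_pmix_eq0 (f : T -> \bar R) : measurable_fun setT f ->
  (\int[P1]_x f x = 0)%E -> (\int[P2]_x f x = 0)%E -> (\int[pmix]_x f x = 0)%E.
Proof.
move=> mf /integral_eq0_funepos_funeneg[c1 [p1 n1]].
move=> /integral_eq0_funepos_funeneg[c2 [p2 n2]].
have mfp := measurable_funepos mf; have mfn := measurable_funeneg mf.
have fp0 x := funepos_ge0 f x; have fn0 x := funeneg_ge0 f x.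
by rewrite integralE !ge0_integral_pmix // p1 n1 p2 n2 subee.
Qed.

End probability_mixture.

Lemma coord_norm_le (R : realType) m n (A : 'M[R]_(m, n)) i j : `|A i j| <= `|A|.
Proof.
rewrite [leRHS]/Num.norm /= mx_normrE.
exact: (le_bigmax _ (fun ij : 'I_m * 'I_n => `|A ij.1 ij.2|) (i, j)).
Qed.

Lemma loc_lip_continuous (R : realType) (d : nat) (W : normedModType R)
    (g : 'rV[R]_d -> W) :
  loc_lip g -> continuous g.
Proof.
move=> lip x; have [L gL] := lip (`|x| + 1).
have nbhs_x : Filter (nbhs x) := nbhs_filter x.
apply/cvgrPdist_lt => e e0.
have eL0 : 0 < e / (`|L| + 1) by rewrite divr_gt0 // ltr_wpDl.
near=> y.
have xy1 : `|x - y| < 1 by near: y; exact: cvgr_dist_lt.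
have xyL : `|x - y| < e / (`|L| + 1) by near: y; exact: cvgr_dist_lt.
have y_le : `|y| <= `|x| + 1.
  by rewrite -[y](subKr x) (le_trans (ler_normB _ _)) // lerD2l ltW.
have gxy := gL _ _ (ler_wpDr ler01 (lexx `|x|)) y_le.
apply: le_lt_trans gxy _.
apply: (@le_lt_trans _ _ ((`|L| + 1) * `|x - y|)).
  by rewrite ler_wpM2r // (le_trans (ler_norm L)) // lerDl.
by rewrite mulrC -ltr_pdivlMr ?ltr_wpDl.
Unshelve. all: by end_near.
Qed.

Lemma continuous_sum (R : realType) (T : topologicalType) n (F : 'I_n -> T -> R) :
  (forall i, continuous (F i)) -> continuous (fun x => \sum_(i < n) F i x).
Proof.
move=> cF; apply: (@continuous_big R 'I_n +%R 0 xpredT (@add_continuous R)) => i _.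
exact: cF.
Qed.

Lemma continuous_Lgen (R : realType) d (U : pseudoPMetricType R)
    (b : 'rV[R]_d -> U -> 'rV[R]_d) (sigma : 'rV[R]_d -> 'M[R]_d)
    (f : 'rV[R]_d -> R) :
  continuous (fun p : 'rV[R]_d * U => b p.1 p.2) -> continuous sigma -> smooth f ->
  continuous (fun p : 'rV[R]_d * U => Lgen b sigma f p.1 p.2).
Proof.
move=> cb csigma sf.
have cfst (g : 'rV[R]_d -> R) : continuous g -> continuous (fun p : 'rV[R]_d * U => g p.1).
  by move=> cg p; apply: continuous_comp (cg _); exact: cvg_fst.
have cpd s : continuous (fun p : 'rV[R]_d * U => iter_pd s f p.1).
  by apply: cfst => x; exact/differentiable_continuous/sf.
have csigma_ij i j : continuous (fun p : 'rV[R]_d * U => sigma p.1 i j).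
  apply: (cfst (fun x => sigma x i j)) => x.
  by apply: (@continuous_comp _ _ _ sigma (fun A : 'M[R]_d => A i j) x (csigma x));
    exact: coord_continuous.
have ca i j : continuous (fun p : 'rV[R]_d * U => diffusion_mx sigma p.1 i j).
  have -> : (fun p : 'rV[R]_d * U => diffusion_mx sigma p.1 i j) =
      (fun p => \sum_(k < d) sigma p.1 i k * sigma p.1 j k).
    by apply/funext => p; rewrite mxE; apply: eq_bigr => k _; rewrite mxE.
  by apply: continuous_sum => k p; exact: continuousM (csigma_ij i k p) (csigma_ij j k p).
rewrite /Lgen => p; apply: cvgD.
  apply: cvgM; first exact: cvg_cst.
  apply: continuous_sum => i; apply: continuous_sum => j q.
  exact: cvgM (ca i j q) (cpd [:: i; j] q).
apply: continuous_sum => i q; apply: cvgM (cpd [:: i] q).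
apply: (@continuous_comp _ _ _ (fun p : 'rV[R]_d * U => b p.1 p.2)
  (fun A : 'rV[R]_d => A 0 i) q (cb q)); exact: coord_continuous.
Qed.

Lemma continuous_Omega_measurable (R : realType) d (U : pseudoPMetricType R)
    (g : 'rV[R]_d * U -> R) :
  continuous g -> measurable_fun setT (fun p : Omega d U => (g p)%:E).
Proof.
move=> cg; apply/measurable_EFinP.
apply: (measurability _ (RGenOInfty.measurableE R)) => //.
move=> _ [_ [x ->] <-]; rewrite setTI; apply: sub_sigma_algebra.
by apply: open_comp; [move=> p _; exact: cg | exact: interval_open].
Qed.

Section ergodic_occupation_convex.
Variables (R : realType) (d : nat) (U : pseudoPMetricType R).
Variables (b : 'rV[R]_d -> U -> 'rV[R]_d) (sigma : 'rV[R]_d -> 'M[R]_d).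
Hypotheses (b_cont : continuous (fun p : 'rV[R]_d * U => b p.1 p.2))
  (sigma_cont : continuous sigma).
Variables (t : {i01 R}) (P1 P2 : probability (Omega d U) R).

Lemma pint_pmix (g : 'rV[R]_d -> U -> R) :
  continuous (fun p : 'rV[R]_d * U => g p.1 p.2) -> (forall x u, 0 <= g x u) ->
  pint (pmix t P1 P2) g = (t%:inum%:E * pint P1 g + (1 - t%:inum)%:E * pint P2 g)%E.
Proof.
move=> cg g0; apply: ge0_integral_pmix.
  exact: (continuous_Omega_measurable cg).
by move=> p; rewrite lee_fin.
Qed.

Lemma Gset_pmix : Gset b sigma P1 -> Gset b sigma P2 -> Gset b sigma (pmix t P1 P2).
Proof.
move=> G1 G2 f Cf; apply: integral_pmix_eq0; [|exact: G1 Cf|exact: G2 Cf].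
by apply: continuous_Omega_measurable; apply: continuous_Lgen => //; case: Cf.
Qed.

End ergodic_occupation_convex.

Lemma ereal_uniform_margin (R : realType) (I : finType) (x : I -> \bar R) (a : I -> R) :
  (forall i, (x i < (a i)%:E)%E) ->
  exists2 m, 0 < m & forall i, (x i <= (a i - m)%:E)%E.
Proof.
move=> xa; pose gap i := if x i is r%:E then a i - r else 1.
exists (\big[Num.min/1]_i gap i).
  apply: lt_bigmin => // i _; rewrite /gap; move: (xa i).
  by case: (x i) => // r; rewrite lte_fin subr_gt0.
move=> i; have := bigmin_le 1 i gap; rewrite /gap; move: (xa i).
by case: (x i) => //= [r _ | _ _]; [rewrite lee_fin lerBrDl -lerBrDr | exact: leNye].
Qed.

Section convex_min_cost.
Local Open Scope ereal_scope.
Variables (R : realType) (k : nat) (P : Type).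
Variables (G : set P) (cost : P -> 'I_k.+1 -> \bar R).
Hypothesis cost_ge0 : forall p i, 0 <= cost p i.
Hypothesis G_convex : forall (t : {i01 R}) p q, G p -> G q ->
  exists2 m, G m & forall i, cost m i = t%:inum%:E * cost p i + (1 - t%:inum)%R%:E * cost q i.

Definition min_cost (delta : 'rV[R]_k) : \bar R :=
  ereal_inf [set cost p ord0 | p in
    [set p | G p /\ forall i : 'I_k, cost p (lift ord0 i) <= (delta 0 i)%:E]].

Variables (p0 : P) (c0 : R).
Hypotheses (G_p0 : G p0) (cost_p0 : cost p0 ord0 = c0%:E).

Lemma min_cost_ge0 (delta : 'rV[R]_k) : 0 <= min_cost delta.
Proof. by apply/ereal_infP => _ [p _ <-]; exact: cost_ge0. Qed.

Lemma min_cost_fin_num (delta : 'rV[R]_k) :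
  (forall i : 'I_k, cost p0 (lift ord0 i) <= (delta 0 i)%:E) -> min_cost delta \is a fin_num.
Proof.
move=> p0_le; rewrite ge0_fin_numE ?min_cost_ge0 //.
by apply: le_lt_trans (ltry c0); rewrite -cost_p0; apply: ereal_inf_lbound; exists p0.
Qed.

Lemma min_cost_le_mix (gamma : 'I_k -> R) (t : {i01 R}) (delta1 delta2 : 'rV[R]_k) :
  (forall i : 'I_k, cost p0 (lift ord0 i) <= (gamma i)%:E) ->
  (forall i, t%:inum * gamma i + (1 - t%:inum) * delta1 0 i <= delta2 0 i)%R ->
  min_cost delta2 <= min_cost delta1 + (t%:inum * c0)%:E.
Proof.
move=> p0_le mix_le; rewrite -leeBlDr //; apply/ereal_infP => _ [p [Gp p_le] <-].
have [q Gq cost_q] := G_convex t G_p0 Gp.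
rewrite leeBlDr //; apply: (@le_trans _ _ (cost q ord0)).
  apply: ereal_inf_lbound; exists q => //; split => // i.
  rewrite cost_q (@le_trans _ _ ((t%:inum * gamma i + (1 - t%:inum) * delta1 0 i)%:E)) //.
    by rewrite [leRHS]EFinD !EFinM leeD // lee_wpmul2l // lee_fin subr_ge0.
  by rewrite lee_fin.
rewrite cost_q cost_p0 addeC EFinM leeD //.
by rewrite gee_pMl // lee_fin gerBl.
Qed.

Let c0_ge0 : (0 <= c0)%R.
Proof. by rewrite -lee_fin -cost_p0. Qed.

Variables (deltahat : 'rV[R]_k) (m : R).
Hypotheses (m_gt0 : (0 < m)%R)
  (p0_margin : forall i : 'I_k, cost p0 (lift ord0 i) <= (deltahat 0 i - m)%R%:E).

Lemma min_cost_near (delta : 'rV[R]_k) : (`|deltahat - delta| < m)%R ->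
  exists w, min_cost delta = w%:E /\
    (`|fine (min_cost deltahat) - w| <= `|deltahat - delta| / m * c0)%R.
Proof.
set e := `|deltahat - delta|%R => e_lt_m.
have e_ge0 : (0 <= e)%R by rewrite /e normr_ge0.
have s_ge0 : (0 <= e / m)%R by rewrite divr_ge0 // ltW.
have s_le1 : (e / m <= 1)%R by rewrite ler_pdivrMr // mul1r ltW.
pose t := Itv01 s_ge0 s_le1.
have sm : (e / m * m = e)%R by rewrite divfK // gt_eqF.
have near_i i : (deltahat 0 i - e <= delta 0 i <= deltahat 0 i + e)%R.
  by have := coord_norm_le (deltahat - delta)%R ord0 i; rewrite !mxE distrC ler_distl.
have up : min_cost delta <= min_cost deltahat + (e / m * c0)%:E.
  apply: (min_cost_le_mix (t := t) p0_margin) => i /=.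
  by have /andP[] := near_i i; nra.
have lo : min_cost deltahat <= min_cost delta + (e / m * c0)%:E.
  apply: (min_cost_le_mix (t := t) p0_margin) => i /=.
  by have /andP[] := near_i i; nra.
have fin_hat : min_cost deltahat \is a fin_num.
  by apply: min_cost_fin_num => i; rewrite (le_trans (p0_margin i)) // lee_fin gerBl ltW.
have fin_delta : min_cost delta \is a fin_num.
  rewrite ge0_fin_numE ?min_cost_ge0 // (le_lt_trans up) //.
  by rewrite -(fineK fin_hat) -EFinD ltry.
exists (fine (min_cost delta)); split; first by rewrite fineK.
move: up lo; rewrite -(fineK fin_hat) -(fineK fin_delta) -!EFinD !lee_fin => up lo.
by rewrite ler_norml; apply/andP; split; lra.
Qed.

Lemma min_cost_continuous : min_cost delta @[delta --> deltahat] --> min_cost deltahat.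
Proof.
have nbhs_hat : Filter (nbhs deltahat) := nbhs_filter deltahat.
have hat_lt_m : (`|deltahat - deltahat| < m)%R by rewrite subrr normr0.
have [v [hv _]] := min_cost_near hat_lt_m; rewrite hv.
have near_hat (eta : R) : (0 < eta)%R ->
    \forall delta \near deltahat, (`|deltahat - delta| < eta)%R.
  exact: (@cvgr_dist_lt R _ _ _ nbhs_hat id deltahat (@cvg_id _ (nbhs deltahat))).
apply: cvg_EFin.
  near=> delta.
  have delta_lt_m : (`|deltahat - delta| < m)%R by near: delta; exact: near_hat.
  by have [w [-> _]] := min_cost_near delta_lt_m.
apply/cvgrPdist_le => eps eps_gt0.
have eta_gt0 : (0 < eps * m / (c0 + 1))%R by rewrite !divr_gt0 ?mulr_gt0 ?ltr_wpDl.
near=> delta.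
have delta_lt_m : (`|deltahat - delta| < m)%R by near: delta; exact: near_hat.
have delta_lt_eta : (`|deltahat - delta| < eps * m / (c0 + 1))%R.
  by near: delta; exact: near_hat.
have [w [/= -> w_le]] := min_cost_near delta_lt_m.
rewrite hv /= in w_le; apply: le_trans w_le _; rewrite mulrAC ler_pdivrMr //.
rewrite ltr_pdivlMr ?ltr_wpDl // in delta_lt_eta.
have := normr_ge0 (deltahat - delta)%R; nra.
Unshelve. all: by end_near.
Qed.

End convex_min_cost.

Theorem lemma3p4 (R : realType) (d kbar : nat) (U : pseudoPMetricType R)
  (U_hausdorff : hausdorff_space U) (U_compact : compact [set: U])
  (b : 'rV[R]_d -> U -> 'rV[R]_d) (sigma : 'rV[R]_d -> 'M[R]_d)
  (b_cont : continuous (fun p : 'rV[R]_d * U => b p.1 p.2))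
  (b_lip : loc_lip_unif b) (sigma_lip : loc_lip sigma)
  (growth : exists C : R, forall x u,
      `|b x u| ^+ 2 + `|sigma x| ^+ 2 <= C * (1 + `|x| ^+ 2))
  (ellipticity : forall rho : R, exists kappa : R, 0 < kappa /\
      forall (x : 'rV[R]_d) (xi : 'rV[R]_d), `|x| <= rho ->
        kappa * `|xi| ^+ 2 <= ((xi *m (diffusion_mx sigma x)) *m xi^T) 0 0)
  (r : 'I_kbar.+1 -> 'rV[R]_d -> U -> R)
  (r_ge0 : forall i x u, 0 <= r i x u)
  (r_cont : forall i, continuous (fun p : 'rV[R]_d * U => r i p.1 p.2))
  (r_lip : forall i, loc_lip_unif (r i))
  (hypA : HypA b sigma (fun x u => \sum_(i < kbar.+1) r i x u))
  (deltahat : 'rV[R]_kbar)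
  (feas : feasible b sigma r deltahat) :
  value b sigma r delta @[delta --> deltahat] --> value b sigma r deltahat.
Proof.
pose cost (pi : probability (Omega d U) R) i := pint pi (r i).
have cost_ge0 pi i : (0 <= cost pi i)%E.
  by apply: integral_ge0 => p _; rewrite lee_fin.
have G_convex (t : {i01 R}) pi1 pi2 : Gset b sigma pi1 -> Gset b sigma pi2 ->
    exists2 pi, Gset b sigma pi & forall i,
      cost pi i = (t%:inum%:E * cost pi1 i + (1 - t%:inum)%:E * cost pi2 i)%E.
  have sigma_cont := loc_lip_continuous sigma_lip.
  by move=> G1 G2; exists (pmix t pi1 pi2) => [|i]; [exact: Gset_pmix | exact: pint_pmix].
case: feas => _ [p0 [[G_p0 p0_lt] cost0_lt]].
have [m m_gt0 p0_margin] := ereal_uniform_margin p0_lt.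
have cost_p0 : cost p0 ord0 = (fine (cost p0 ord0))%:E.
  by rewrite fineK // ge0_fin_numE.
exact: (min_cost_continuous cost_ge0 G_convex G_p0 cost_p0 m_gt0 p0_margin).
Qed.
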